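(* In the standing setting below, assume in addition that $\rho$ satisfies $$\partial_t\rho+\frac1r\partial_r(r\rho v)=\frac{k_\rho\, w}{w+K_{w\rho}}\,f\Big(1-\frac{\rho}{\rho_m}\Big)-\lambda_\rho\rho\quad\text{in } R(t)<r<L,\ 0<t<T,$$ where $k_\rho>0$, $K_{w\rho}>0$, $\lambda_\rho>0$, $\rho_m>1$ are constants and $w\ge0$, $f\ge 0$ are given continuous functions on $\Omega_T$. If $\rho(r,0)<\rho_m$ for all $R_0\le r\le L$, then $\rho<\rho_m$ in $\Omega_T$.
   Context: Standing setting. Fix constants $L>0$, $0<R_0<L$, $\beta>0$, $T>0$. Let $R\in C^1([0,T))$ with $R(0)=R_0$ and $0<R(t)<L$, and set $\Omega_T=\{(r,t): R(t)\le r\le L,\ 0\le t<T\}$. Let $\rho\ge 0$ be a classical (continuously differentiable) function on $\Omega_T$ (the matrix density), and define the pressure $P(r,t)=P(\rho(r,t))$ where $P(\rho)=\beta(\rho-1)$ for $\rho\ge1$ and $P(\rho)=0$ for $\rho<1$. Let $v(r,t)$ be a classical function on $\Omega_T$ (twice continuously differentiable in $r$) satisfying $\frac1r\partial_r(r\,\partial_r v)-\frac{v}{r^2}=\partial_r P$ for $R(t)<r<L$, with $v(L,t)=0$, $\partial_r v(R(t),t)=P(R(t),t)$, and the free-boundary law $\dot R(t)=v(R(t),t)$. Define $Q(t)=\int_{R(t)}^L y\,P(y,t)\,dy$. *)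

From Stdlib Require Import Reals Lra.
Open Scope R_scope.

Definition Pfun (beta x : R) : R := if Rle_dec 1 x then beta * (x - 1) else 0.

Definition OmegaT (Rb : R -> R) (L T r t : R) : Prop :=
  0 <= t < T /\ Rb t <= r <= L.

Definition deriv_within (D : R -> Prop) (g : R -> R) (l x : R) : Prop :=
  forall eps, 0 < eps -> exists delta, 0 < delta /\
    forall y, D y -> y <> x -> Rabs (y - x) < delta ->
      Rabs ((g y - g x) / (y - x) - l) < eps.

Definition cont_within (D : R -> Prop) (g : R -> R) (x : R) : Prop :=
  forall eps, 0 < eps -> exists delta, 0 < delta /\
    forall y, D y -> Rabs (y - x) < delta -> Rabs (g y - g x) < eps.

Definition cont2_within (D : R -> R -> Prop) (g : R -> R -> R) (x t : R) : Prop :=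
  forall eps, 0 < eps -> exists delta, 0 < delta /\
    forall y s, D y s -> Rabs (y - x) < delta -> Rabs (s - t) < delta ->
      Rabs (g y s - g x t) < eps.

From Stdlib Require Import Reals Lra Classical.
Open Scope R_scope.

(* If rho >= rho_m somewhere, a compactness argument gives a first time
   ts > 0 and a point rs in [R(ts), L] with rho(rs, ts) = rho_m, rho <= rho_m
   at time ts and rho < rho_m before ([first_contact]).  Three facts then
   contradict each other at (rs, ts):
   - the velocity equation is ((1/r)(r v)_r)_r = P_r, so v_r + v/r - P(rho) is
     constant on the slice; with v(L) = 0 and v_r(R) = P(rho(R)) the constant
     exceeds -P(rho_m), so the divergence v_r + v/r is positive where
     rho = rho_m ([FirstIntegral], [divergence_at_contact]);
   - at rho = rho_m the growth term vanishes and the transport equation gives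
     rho_t + v rho_r = - lambda rho_m - rho_m (v_r + v/r) < 0
     ([transport_at_contact]);
   - the contact geometry forces rho_t + v rho_r >= 0: at r = L (where v = 0)
     and inside (where rho_r = 0) by one-sided extremum tests, and on the
     moving boundary (where v = R') by a first-order expansion of rho along a
     staircase path that reaches (R(ts), ts) from earlier times inside the
     region ([boundary_contact]). *)

(* Composing with it turns continuity relative to
   the closed interval [p, q] into ordinary continuity, which is the form used
   by the Stdlib mean value theorem and by its continuity algebra. *)
Definition clamp (p q y : R) : R := Rmax p (Rmin q y).

Lemma clamp_in p q y : p <= q -> p <= clamp p q y <= q.
Proof. intros; unfold clamp, Rmax, Rmin; repeat destruct Rle_dec; lra. Qed.

Lemma clamp_id p q y : p <= y <= q -> clamp p q y = y.
Proof. intros; unfold clamp, Rmax, Rmin; repeat destruct Rle_dec; lra. Qed.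

Lemma clamp_lipschitz p q x y : p <= q ->
  Rabs (clamp p q y - clamp p q x) <= Rabs (y - x).
Proof.
  intros; unfold clamp, Rmax, Rmin; repeat destruct Rle_dec;
  unfold Rabs; repeat destruct Rcase_abs; lra.
Qed.

Lemma Rabs_le_inv a b : Rabs a <= b -> - b <= a <= b.
Proof. unfold Rabs; destruct Rcase_abs; lra. Qed.

Lemma continuity_pt_intro g x :
  (forall eps, 0 < eps -> exists d, 0 < d /\
     forall y, Rabs (y - x) < d -> Rabs (g y - g x) < eps) ->
  continuity_pt g x.
Proof.
  intros H eps Heps. destruct (H eps Heps) as [d [Hd Hy]].
  exists d; split; [lra|]. intros y [_ Hyx]. exact (Hy y Hyx).
Qed.

Lemma continuity_clamp p q x : p <= q -> continuity_pt (clamp p q) x.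
Proof.
  intros Hpq. apply continuity_pt_intro. intros eps Heps. exists eps; split; auto.
  intros y Hy. eapply Rle_lt_trans; [apply clamp_lipschitz|]; auto.
Qed.

Lemma cont_within_clamp D g p q x : p <= q -> (forall y, p <= y <= q -> D y) ->
  p <= x <= q -> cont_within D g x -> continuity_pt (fun y => g (clamp p q y)) x.
Proof.
  intros Hpq HD Hx Hc. apply continuity_pt_intro. intros eps Heps.
  destruct (Hc eps Heps) as [d [Hd Hy]]. exists d; split; auto.
  intros y Hyx. rewrite (clamp_id p q x Hx). apply Hy.
  - apply HD, clamp_in; auto.
  - rewrite <- (clamp_id p q x Hx) at 1.
    eapply Rle_lt_trans; [apply clamp_lipschitz|]; auto.
Qed.

Lemma cont_within_subset (D D' : R -> Prop) g x : (forall y, D' y -> D y) ->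
  cont_within D g x -> cont_within D' g x.
Proof.
  intros HD Hc eps Heps. destruct (Hc eps Heps) as [d [Hd Hy]].
  exists d; split; auto.
Qed.

Lemma cont2_within_slice_r (D : R -> R -> Prop) g x t :
  cont2_within D g x t -> cont_within (fun y => D y t) (fun y => g y t) x.
Proof.
  intros Hc eps Heps. destruct (Hc eps Heps) as [d [Hd Hy]]. exists d; split; auto.
  intros y Dy Hyx. apply Hy; auto. rewrite Rminus_diag, Rabs_R0; auto.
Qed.

Lemma cont2_within_slice_t (D : R -> R -> Prop) g x t :
  cont2_within D g x t -> cont_within (fun s => D x s) (fun s => g x s) t.
Proof.
  intros Hc eps Heps. destruct (Hc eps Heps) as [d [Hd Hy]]. exists d; split; auto.
  intros s Ds Hst. apply Hy; auto. rewrite Rminus_diag, Rabs_R0; auto.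
Qed.

Lemma cont2_slice_clamp (D : R -> R -> Prop) g p q x t : p <= q ->
  (forall y, p <= y <= q -> D y t) -> p <= x <= q -> cont2_within D g x t ->
  continuity_pt (fun y => g (clamp p q y) t) x.
Proof.
  intros Hpq HD Hx Hc. apply (cont_within_clamp (fun y => D y t) (fun y => g y t)); auto.
  apply cont2_within_slice_r; auto.
Qed.

Lemma deriv_within_taylor D g l x eps : 0 < eps -> deriv_within D g l x ->
  exists d, 0 < d /\ forall y, D y -> Rabs (y - x) < d ->
    Rabs (g y - g x - l * (y - x)) <= eps * Rabs (y - x).
Proof.
  intros Heps Hd. destruct (Hd eps Heps) as [d [Hpos Hy]]. exists d; split; auto.
  intros y Dy Hyx. destruct (Req_dec y x) as [->|Hne].
  - rewrite !Rminus_diag, Rmult_0_r, Rminus_0_r, Rabs_R0, Rmult_0_r. lra.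
  - replace (g y - g x - l * (y - x)) with (((g y - g x) / (y - x) - l) * (y - x))
      by (field; lra).
    rewrite Rabs_mult. apply Rmult_le_compat_r; [apply Rabs_pos|].
    left; auto.
Qed.

Lemma deriv_within_cont D g l x : deriv_within D g l x -> cont_within D g x.
Proof.
  intros Hd eps Heps. destruct (deriv_within_taylor D g l x 1 Rlt_0_1 Hd) as [d [Hpos Hy]].
  assert (Hl : 0 < Rabs l + 1) by (pose proof (Rabs_pos l); lra).
  exists (Rmin d (eps / (Rabs l + 1))). split.
  { apply Rmin_pos; auto. apply Rdiv_lt_0_compat; auto. }
  intros y Dy Hyx. pose proof (Rmin_l d (eps / (Rabs l + 1))).
  pose proof (Rmin_r d (eps / (Rabs l + 1))).
  specialize (Hy y Dy ltac:(lra)).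
  assert (Hlin : Rabs (l * (y - x)) <= Rabs l * Rabs (y - x)) by (rewrite Rabs_mult; lra).
  pose proof (Rabs_triang (g y - g x - l * (y - x)) (l * (y - x))) as Htri.
  replace (g y - g x - l * (y - x) + l * (y - x)) with (g y - g x) in Htri by ring.
  assert (Hsmall : (Rabs l + 1) * Rabs (y - x) < eps).
  { apply Rmult_lt_reg_r with (/ (Rabs l + 1)); [apply Rinv_0_lt_compat; lra|].
    replace ((Rabs l + 1) * Rabs (y - x) * / (Rabs l + 1)) with (Rabs (y - x))
      by (field; lra). unfold Rdiv in *. lra. }
  lra.
Qed.

Lemma deriv_within_interior D g l p q x : p < x < q ->
  (forall y, p < y < q -> D y) -> deriv_within D g l x -> derivable_pt_lim g x l.
Proof.
  intros Hx HD Hw eps Heps. destruct (Hw eps Heps) as [d [Hd Hy]].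
  assert (Hm : 0 < Rmin d (Rmin (x - p) (q - x))) by (repeat apply Rmin_pos; lra).
  exists (mkposreal _ Hm). intros h Hh Hhd. simpl in Hhd.
  pose proof (Rmin_l d (Rmin (x - p) (q - x))); pose proof (Rmin_r d (Rmin (x - p) (q - x))).
  pose proof (Rmin_l (x - p) (q - x)); pose proof (Rmin_r (x - p) (q - x)).
  replace h with (x + h - x) at 2 by ring. apply Hy.
  - apply HD. apply Rabs_def2 in Hhd. lra.
  - intro C. apply Hh. lra.
  - replace (x + h - x) with h by ring. lra.
Qed.

Lemma deriv_within_left_max D g l x d0 : 0 < d0 -> deriv_within D g l x ->
  (forall y, x - d0 < y < x -> D y /\ g y <= g x) -> 0 <= l.
Proof.
  intros Hd0 Hw Hy. destruct (Rle_or_lt 0 l) as [|Hl]; auto.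
  destruct (deriv_within_taylor D g l x (- l / 2)) as [d [Hd Ht]]; [lra|auto|].
  set (u := Rmin d d0 / 2).
  assert (Hu : 0 < u < d /\ u < d0).
  { unfold u. pose proof (Rmin_l d d0); pose proof (Rmin_r d d0).
    pose proof (Rmin_pos d d0 Hd Hd0). lra. }
  destruct (Hy (x - u)) as [Dy Hg]; [lra|].
  specialize (Ht (x - u) Dy). replace (x - u - x) with (- u) in Ht by ring.
  specialize (Ht ltac:(rewrite Rabs_Ropp, Rabs_right; lra)).
  rewrite Rabs_Ropp, (Rabs_right u) in Ht by lra. apply Rabs_le_inv in Ht. nra.
Qed.

Lemma deriv_within_right_max D g l x d0 : 0 < d0 -> deriv_within D g l x ->
  (forall y, x < y < x + d0 -> D y /\ g y <= g x) -> l <= 0.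
Proof.
  intros Hd0 Hw Hy. destruct (Rle_or_lt l 0) as [|Hl]; auto.
  destruct (deriv_within_taylor D g l x (l / 2)) as [d [Hd Ht]]; [lra|auto|].
  set (u := Rmin d d0 / 2).
  assert (Hu : 0 < u < d /\ u < d0).
  { unfold u. pose proof (Rmin_l d d0); pose proof (Rmin_r d d0).
    pose proof (Rmin_pos d d0 Hd Hd0). lra. }
  destruct (Hy (x + u)) as [Dy Hg]; [lra|].
  specialize (Ht (x + u) Dy). replace (x + u - x) with u in Ht by ring.
  specialize (Ht ltac:(rewrite Rabs_right; lra)).
  rewrite (Rabs_right u) in Ht by lra. apply Rabs_le_inv in Ht. nra.
Qed.

Lemma mvt_interval g g' p q : p < q ->
  (forall x, p <= x <= q -> continuity_pt (fun y => g (clamp p q y)) x) ->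
  (forall x, p < x < q -> derivable_pt_lim g x (g' x)) ->
  exists c, p < c < q /\ g q - g p = g' c * (q - p).
Proof.
  intros Hpq Hc Hd. set (G := fun y => g (clamp p q y)).
  assert (HG : forall c, p < c < q -> derivable_pt_lim G c (g' c)).
  { intros c Hcpq. apply (derivable_pt_lim_locally_ext g G c p q); auto.
    intros z Hz. unfold G. rewrite clamp_id; lra. }
  destruct (MVT G id p q (fun c P => exist _ (g' c) (HG c P))
              (fun c _ => derivable_pt_id c) Hpq Hc) as [c [P HP]].
  { intros; apply derivable_continuous_pt, derivable_pt_id. }
  exists c; split; auto. simpl in HP. rewrite derive_pt_id in HP.
  unfold G, id in HP. rewrite !clamp_id in HP by lra. lra.
Qed.

Lemma segment_increment D g g' p q l e : p <= q ->
  (forall x, p <= x <= q -> D x) ->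
  (forall x, p <= x <= q -> cont_within D g x) ->
  (forall x, p < x < q -> deriv_within D g (g' x) x) ->
  (forall x, p < x < q -> Rabs (g' x - l) <= e) ->
  Rabs (g q - g p - l * (q - p)) <= e * (q - p).
Proof.
  intros Hpq HD Hc Hd Hb. destruct (Req_dec p q) as [<-|Hne].
  { replace (g p - g p - l * (p - p)) with 0 by ring.
    rewrite Rabs_R0, Rminus_diag, Rmult_0_r. lra. }
  destruct (mvt_interval g g' p q) as [c [Hcpq Hinc]]; [lra| | |].
  - intros x Hx. apply (cont_within_clamp D); auto.
  - intros x Hx. apply (deriv_within_interior D g _ p q); auto.
    intros y Hy; apply HD; lra.
  - rewrite Hinc. replace (g' c * (q - p) - l * (q - p)) with ((g' c - l) * (q - p)) by ring.
    rewrite Rabs_mult, (Rabs_right (q - p)) by lra.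
    apply Rmult_le_compat_r; [lra| auto].
Qed.

Lemma vanishing_extension g p q x : p < q -> p <= x <= q -> continuity_pt g x ->
  (forall y, p < y < q -> g y = 0) -> g x = 0.
Proof.
  intros Hpq Hx Hc Hz. apply NNPP; intro Hne.
  destruct (Hc (Rabs (g x))) as [d [Hd Hy]]; [apply Rabs_pos_lt; auto|].
  set (m := Rmin (d / 2) ((q - p) / 4)).
  assert (Hm : 0 < m <= d / 2 /\ m <= (q - p) / 4).
  { unfold m. pose proof (Rmin_l (d / 2) ((q - p) / 4)).
    pose proof (Rmin_r (d / 2) ((q - p) / 4)). split; [split|]; auto.
    apply Rmin_pos; lra. }
  assert (Hnear : exists y, p < y < q /\ Rabs (y - x) = m).
  { destruct (Rle_or_lt x ((p + q) / 2)).
    - exists (x + m). split; [lra|]. replace (x + m - x) with m by ring. apply Rabs_right; lra.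
    - exists (x - m). split; [lra|]. replace (x - m - x) with (- m) by ring.
      rewrite Rabs_Ropp. apply Rabs_right; lra. }
  destruct Hnear as [y [Hyr Hyd]].
  assert (Hyx : x <> y) by (intro E; rewrite E, Rminus_diag, Rabs_R0 in Hyd; lra).
  specialize (Hy y). simpl in Hy. unfold R_dist in Hy.
  rewrite (Hz y Hyr), Rminus_0_l, Rabs_Ropp in Hy.
  apply (Rlt_irrefl (Rabs (g x))), Hy. split; [split; [exact I| exact Hyx]|]. lra.
Qed.

Lemma Pfun_lipschitz beta x y : 0 < beta ->
  Rabs (Pfun beta x - Pfun beta y) <= beta * Rabs (x - y).
Proof.
  intros Hb. unfold Pfun. destruct (Rle_dec 1 x), (Rle_dec 1 y);
  unfold Rabs; repeat destruct Rcase_abs; nra.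
Qed.

Lemma Pfun_monotone beta x y : 0 < beta -> x <= y -> Pfun beta x <= Pfun beta y.
Proof. intros; unfold Pfun; destruct (Rle_dec 1 x), (Rle_dec 1 y); nra. Qed.

Lemma Pfun_above_one beta x : 1 <= x -> Pfun beta x = beta * (x - 1).
Proof. intros; unfold Pfun; destruct (Rle_dec 1 x); lra. Qed.

(* Continuity algebra in pointwise form (the Stdlib lemmas are stated for
   the function operators plus_fct, mult_fct, ...). *)
Lemma cont_const k x : continuity_pt (fun _ => k) x.
Proof. apply continuity_pt_const; intros p q; reflexivity. Qed.

Lemma cont_plus g h x : continuity_pt g x -> continuity_pt h x ->
  continuity_pt (fun y => g y + h y) x.
Proof. apply continuity_pt_plus. Qed.

Lemma cont_minus g h x : continuity_pt g x -> continuity_pt h x ->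
  continuity_pt (fun y => g y - h y) x.
Proof. apply continuity_pt_minus. Qed.

Lemma cont_mult g h x : continuity_pt g x -> continuity_pt h x ->
  continuity_pt (fun y => g y * h y) x.
Proof. apply continuity_pt_mult. Qed.

Lemma cont_inv g x : continuity_pt g x -> g x <> 0 ->
  continuity_pt (fun y => / g y) x.
Proof. apply continuity_pt_inv. Qed.

Lemma cont_div g h x : continuity_pt g x -> continuity_pt h x -> h x <> 0 ->
  continuity_pt (fun y => g y / h y) x.
Proof. apply continuity_pt_div. Qed.

Lemma cont_Pfun beta g x : 0 < beta -> continuity_pt g x ->
  continuity_pt (fun y => Pfun beta (g y)) x.
Proof.
  intros Hb Hg. apply (continuity_pt_comp g (Pfun beta)); auto.
  apply continuity_pt_intro. intros eps Heps. exists (eps / beta). split.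
  { apply Rdiv_lt_0_compat; auto. }
  intros y Hy. eapply Rle_lt_trans; [apply Pfun_lipschitz; auto|].
  apply Rmult_lt_compat_l with (r := beta) in Hy; auto.
  replace (beta * (eps / beta)) with eps in Hy by (field; lra). auto.
Qed.

Ltac continuity_split :=
  repeat first
    [ apply cont_const | apply cont_minus | apply cont_plus | apply cont_div
    | apply cont_mult | apply cont_inv
    | apply cont_Pfun; [assumption|]
    | apply continuity_clamp; lra ].

(* The left-hand side is ((1/x)(x u)')', so the divergence u' + u/x differs
   from the pressure by a constant, fixed by the boundary condition at a. *)
Section FirstIntegral.

Variables (a L beta : R) (u du ddu rh dP : R -> R).
Hypotheses
  (Ha : 0 < a < L) (Hbeta : 0 < beta)
  (Hu_cont : forall x, a <= x <= L -> cont_within (fun y => a <= y <= L) u x)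
  (Hdu_cont : forall x, a <= x <= L -> cont_within (fun y => a <= y <= L) du x)
  (Hrh_cont : forall x, a <= x <= L -> cont_within (fun y => a <= y <= L) rh x)
  (Hu_der : forall x, a < x < L -> derivable_pt_lim u x (du x))
  (Hdu_der : forall x, a < x < L -> derivable_pt_lim du x (ddu x))
  (HP_der : forall x, a < x < L -> derivable_pt_lim (fun y => Pfun beta (rh y)) x (dP x))
  (Heq : forall x, a < x < L -> / x * (du x + x * ddu x) - u x / x ^ 2 = dP x)
  (HuL : u L = 0)
  (Hdua : du a = Pfun beta (rh a)).

Lemma velocity_atoms_cont p q x : a <= p <= q -> q <= L -> p <= x <= q ->
  continuity_pt (fun y => u (clamp p q y)) x /\
  continuity_pt (fun y => du (clamp p q y)) x /\
  continuity_pt (fun y => rh (clamp p q y)) x.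
Proof.
  intros Hp Hq Hx.
  split; [|split]; apply (cont_within_clamp (fun y => a <= y <= L));
    try lra; try (intros; lra); [apply Hu_cont| apply Hdu_cont| apply Hrh_cont]; lra.
Qed.

Lemma first_integral_const x : a <= x <= L ->
  du x + u x / x - Pfun beta (rh x) = u a / a.
Proof.
  intros Hx. set (D := fun y => du y + u y / y - Pfun beta (rh y)).
  assert (HDa : D a = u a / a) by (unfold D; rewrite Hdua; ring).
  change (D x = u a / a). rewrite <- HDa.
  destruct (Req_dec x a) as [->|Hne]; auto.
  destruct (mvt_interval D (fun _ => 0) a x) as [c [Hc Hinc]]; [lra| | |lra].
  - intros y Hy. destruct (velocity_atoms_cont a x y) as [Hu [Hdu Hrh]]; try lra.
    unfold D. continuity_split; auto. rewrite clamp_id; lra.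
  - intros y Hy. unfold D.
    assert (Hy0 : y <> 0) by lra.
    pose proof (Heq y ltac:(lra)) as He.
    replace 0 with (ddu y + (du y * y - 1 * u y) / y² - dP y)
      by (rewrite <- He; unfold Rsqr; field; auto).
    apply derivable_pt_lim_minus; [apply derivable_pt_lim_plus|apply HP_der; lra].
    + apply Hdu_der; lra.
    + apply (derivable_pt_lim_div u (fun z => z)); auto.
      * apply Hu_der; lra.
      * apply derivable_pt_lim_id.
Qed.

(* If rh never exceeds m > 1, the constant u(a)/a exceeds -P(m): otherwise
   (x u)' = x (u(a)/a + P(rh)) <= 0 would force u(a) >= 0. *)
Lemma first_integral_lower m : 1 < m -> (forall x, a <= x <= L -> rh x <= m) ->
  - Pfun beta m < u a / a.
Proof.
  intros Hm Hle. apply Rnot_le_lt; intro Hneg.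
  assert (HPm : 0 < Pfun beta m) by (rewrite Pfun_above_one; nra).
  destruct (mvt_interval (fun y => y * u y) (fun y => 1 * u y + y * du y) a L)
    as [c [Hc Hinc]]; [lra| | |].
  - intros y Hy. destruct (velocity_atoms_cont a L y) as [Hu _]; try lra.
    continuity_split; auto.
  - intros y Hy. apply (derivable_pt_lim_mult (fun z => z) u).
    + apply derivable_pt_lim_id.
    + apply Hu_der; auto.
  - rewrite HuL, Rmult_0_r in Hinc.
    assert (Hdiv : 1 * u c + c * du c = c * (u a / a + Pfun beta (rh c))).
    { rewrite <- (first_integral_const c) by lra. field. lra. }
    assert (HPc : Pfun beta (rh c) <= Pfun beta m)
      by (apply Pfun_monotone; auto; apply Hle; lra).
    assert (c * (u a / a + Pfun beta (rh c)) <= 0) by nra.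
    assert (Hua : 0 <= u a) by nra.
    assert (0 <= u a / a) by (unfold Rdiv; apply Rmult_le_pos; [lra| left; apply Rinv_0_lt_compat; lra]).
    lra.
Qed.

Lemma divergence_positive_at_max m x : 1 < m ->
  (forall y, a <= y <= L -> rh y <= m) -> a <= x <= L -> rh x = m ->
  0 < du x + u x / x.
Proof.
  intros Hm Hle Hx Hrx. pose proof (first_integral_const x Hx) as Hc.
  pose proof (first_integral_lower m Hm Hle). rewrite Hrx in Hc. lra.
Qed.

End FirstIntegral.

Lemma inf_approx (P : R -> Prop) m : (exists x, P x) -> (forall x, P x -> m <= x) ->
  exists g, m <= g /\ (forall x, P x -> g <= x) /\
    (forall e, 0 < e -> exists x, P x /\ x < g + e).
Proof.
  intros [x0 Hx0] Hm.
  set (LB := fun y => forall x, P x -> y <= x).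
  destruct (completeness LB) as [g [Hub Hlub]].
  { exists x0. intros y Hy. exact (Hy x0 Hx0). }
  { exists m. exact Hm. }
  exists g. split; [exact (Hub m Hm)|]. split.
  - intros x Hx. apply Hlub. intros y Hy. exact (Hy x Hx).
  - intros e He. apply NNPP; intro Hno.
    assert (Hge : LB (g + e)).
    { intros x Hx. apply Rnot_lt_le. intro. apply Hno. exists x; auto. }
    specialize (Hub _ Hge). lra.
Qed.

(* Cluster point of a family of bounded sets Q e, increasing in e: some rs
   lies within d of a point of Q d, for every d > 0.  It is the supremum of
   the x that stay below points of every Q e. *)
Lemma cluster_point (Q : R -> R -> Prop) lo hi :
  (forall e, 0 < e -> exists r, Q e r) ->
  (forall e r, Q e r -> lo <= r <= hi) ->
  (forall e e' r, e <= e' -> Q e r -> Q e' r) ->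
  exists rs, forall d, 0 < d -> exists r, Q d r /\ Rabs (r - rs) < d.
Proof.
  intros Hne Hbd Hmono.
  set (E := fun x => forall e, 0 < e -> exists r, Q e r /\ x <= r).
  destruct (completeness E) as [rs [Hub Hlub]].
  { exists hi. intros x Hx. destruct (Hx 1 Rlt_0_1) as [r [Hr Hxr]].
    pose proof (Hbd _ _ Hr). lra. }
  { exists lo. intros e He. destruct (Hne e He) as [r Hr].
    exists r. split; auto. apply (Hbd _ _ Hr). }
  exists rs. intros d Hd.
  assert (Habove : ~ E (rs + d / 2)) by (intro Hx; specialize (Hub _ Hx); lra).
  apply not_all_ex_not in Habove. destruct Habove as [e0 He0].
  apply imply_to_and in He0. destruct He0 as [He0 Hfar].
  assert (Hbelow : exists x, E x /\ rs - d / 2 < x).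
  { apply NNPP; intro Hno.
    assert (Hup : is_upper_bound E (rs - d / 2)).
    { intros x Hx. apply Rnot_lt_le. intro. apply Hno. eauto. }
    specialize (Hlub _ Hup). lra. }
  destruct Hbelow as [x [Hx Hxrs]].
  destruct (Hx (Rmin e0 d)) as [r [Hr Hxr]]; [apply Rmin_pos; auto|].
  exists r. split; [apply (Hmono (Rmin e0 d)); auto; apply Rmin_r|].
  assert (Hnear : r < rs + d / 2).
  { apply Rnot_le_lt. intro. apply Hfar. exists r. split; [|lra].
    apply (Hmono (Rmin e0 d)); auto; apply Rmin_l. }
  apply Rabs_def1; lra.
Qed.

Section FirstContact.

Variables (Rb : R -> R) (L T c : R) (rho : R -> R -> R).
Hypotheses
  (HRb_cont : forall t, 0 <= t < T -> cont_within (fun s => 0 <= s < T) Rb t)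
  (HRb_range : forall t, 0 <= t < T -> 0 < Rb t < L)
  (Hrho_cont : forall r t, OmegaT Rb L T r t -> cont2_within (OmegaT Rb L T) rho r t).

Lemma limit_of_exceedances ts rs : 0 <= ts < T ->
  (forall d, 0 < d -> exists r t, OmegaT Rb L T r t /\ c <= rho r t /\
     ts <= t < ts + d /\ Rabs (r - rs) < d) ->
  OmegaT Rb L T rs ts /\ c <= rho rs ts.
Proof.
  intros Hts Hnear.
  assert (HrsL : rs <= L).
  { apply Rnot_lt_le; intro.
    destruct (Hnear (rs - L)) as [r [t [[_ [_ HrL]] [_ [_ Hr]]]]]; [lra|].
    apply Rabs_def2 in Hr. lra. }
  assert (HrsR : Rb ts <= rs).
  { apply Rnot_lt_le; intro Hlt. set (g := Rb ts - rs).
    destruct (HRb_cont ts Hts (g / 2)) as [d [Hd Hcont]]; [unfold g; lra|].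
    destruct (Hnear (Rmin d (g / 2))) as [r [t [[Ht [Hr _]] [_ [Htt Hrr]]]]];
      [apply Rmin_pos; unfold g; lra|].
    pose proof (Rmin_l d (g / 2)); pose proof (Rmin_r d (g / 2)).
    specialize (Hcont t Ht ltac:(apply Rabs_def1; lra)).
    apply Rabs_def2 in Hcont. apply Rabs_def2 in Hrr. unfold g in *. lra. }
  assert (Hin : OmegaT Rb L T rs ts) by (repeat split; lra).
  split; auto. apply Rnot_lt_le; intro Hlt.
  destruct (Hrho_cont rs ts Hin (c - rho rs ts)) as [d [Hd Hcont]]; [lra|].
  destruct (Hnear d Hd) as [r [t [Hrt [Hc [Htt Hrr]]]]].
  specialize (Hcont r t Hrt Hrr ltac:(apply Rabs_def1; lra)).
  apply Rabs_def2 in Hcont. lra.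
Qed.

Lemma below_up_to_contact ts : 0 < ts < T ->
  (forall s r, 0 <= s < ts -> Rb s <= r <= L -> rho r s < c) ->
  forall r, Rb ts <= r <= L -> rho r ts <= c.
Proof.
  intros Hts Hbefore r Hr. apply Rnot_lt_le; intro Hlt.
  assert (Hin : OmegaT Rb L T r ts) by (repeat split; lra).
  destruct (Hrho_cont r ts Hin (rho r ts - c)) as [d [Hd Hcont]]; [lra|].
  destruct (HRb_cont ts ltac:(lra) (d / 2)) as [d' [Hd' HRbc]]; [lra|].
  set (h := Rmin (Rmin d d') ts / 2).
  assert (Hh : 0 < h < d /\ h < d' /\ h < ts).
  { unfold h. pose proof (Rmin_l (Rmin d d') ts); pose proof (Rmin_r (Rmin d d') ts).
    pose proof (Rmin_l d d'); pose proof (Rmin_r d d').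
    assert (0 < Rmin (Rmin d d') ts) by (repeat apply Rmin_pos; lra). lra. }
  set (s := ts - h). set (r' := Rmax r (Rb s)).
  assert (Hs : 0 <= s < ts /\ Rabs (s - ts) < d /\ Rabs (s - ts) < d').
  { unfold s. split; [lra|]. split; apply Rabs_def1; lra. }
  specialize (HRbc s ltac:(lra) (proj2 (proj2 Hs))).
  apply Rabs_def2 in HRbc. pose proof (HRb_range s ltac:(lra)).
  assert (Hr' : Rb s <= r' <= L /\ Rabs (r' - r) < d).
  { unfold r', Rmax. destruct Rle_dec; split; try lra.
    - apply Rabs_def1; lra.
    - rewrite Rminus_diag, Rabs_R0; lra. }
  specialize (Hcont r' s ltac:(split; lra) (proj2 Hr') (proj1 (proj2 Hs))).
  apply Rabs_def2 in Hcont.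
  pose proof (Hbefore s r' ltac:(lra) (proj1 Hr')). lra.
Qed.

Lemma first_contact :
  (forall r, Rb 0 <= r <= L -> rho r 0 < c) ->
  (exists r t, OmegaT Rb L T r t /\ c <= rho r t) ->
  exists ts rs, 0 < ts < T /\ Rb ts <= rs <= L /\ rho rs ts = c /\
    (forall r, Rb ts <= r <= L -> rho r ts <= c) /\
    (forall s r, 0 <= s < ts -> Rb s <= r <= L -> rho r s < c).
Proof.
  intros Hinit [r0 [t0 [Hin0 Hc0]]].
  destruct (inf_approx (fun t => exists r, OmegaT Rb L T r t /\ c <= rho r t) 0)
    as [ts [Hts0 [Hfirst Happrox]]].
  { exists t0, r0; auto. }
  { intros t [r [[Ht _] _]]; lra. }
  assert (HtsT : ts < T).
  { pose proof (Hfirst t0 (ex_intro _ r0 (conj Hin0 Hc0))). destruct Hin0. lra. }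
  destruct (cluster_point (fun e r => exists t, OmegaT Rb L T r t /\ c <= rho r t /\ t < ts + e)
              0 L) as [rs Hrs].
  { intros e He. destruct (Happrox e He) as [t [[r Hr] Ht]]. exists r, t. tauto. }
  { intros e r [t [[Ht Hr] _]]. pose proof (HRb_range t Ht). lra. }
  { intros e e' r He [t Ht]. exists t. split; [tauto|]. split; [tauto|]. lra. }
  destruct (limit_of_exceedances ts rs) as [[_ Hrs_in] Hcrs]; [lra| |].
  { intros d Hd. destruct (Hrs d Hd) as [r [[t [Hrt [Hc Ht]]] Hr]].
    pose proof (Hfirst t (ex_intro _ r (conj Hrt Hc))). exists r, t. split; [exact Hrt|]. split; [exact Hc|]. split; [lra| exact Hr]. }
  assert (Hbefore : forall s r, 0 <= s < ts -> Rb s <= r <= L -> rho r s < c).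
  { intros s r Hs Hr. apply Rnot_le_lt; intro.
    assert (Hin : OmegaT Rb L T r s) by (repeat split; lra).
    pose proof (Hfirst s (ex_intro _ r (conj Hin H))). lra. }
  assert (Hts : 0 < ts).
  { destruct Hts0 as [|<-]; auto. pose proof (Hinit rs Hrs_in). lra. }
  exists ts, rs. pose proof (below_up_to_contact ts ltac:(lra) Hbefore) as Hbelow.
  repeat split; auto; try lra. apply Rle_antisym; auto.
Qed.

End FirstContact.

Lemma perturbed_slope A B V : A + V * B < 0 ->
  exists eps, 0 < eps /\ A - B * (eps - V) < (A + V * B) / 2.
Proof.
  intros Hneg. set (eta := - (A + V * B) / 2).
  pose proof (Rabs_pos B). pose proof (Rle_abs (- B)). rewrite Rabs_Ropp in *.
  exists (eta / (Rabs B + 1)). split; [apply Rdiv_lt_0_compat; unfold eta; lra|].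
  assert (Hsmall : Rabs B * (eta / (Rabs B + 1)) < eta).
  { apply Rmult_lt_reg_r with (Rabs B + 1); [lra|].
    replace (Rabs B * (eta / (Rabs B + 1)) * (Rabs B + 1)) with (Rabs B * eta)
      by (field; lra). unfold eta. nra. }
  assert (0 <= eta / (Rabs B + 1)) by (left; apply Rdiv_lt_0_compat; unfold eta; lra).
  unfold eta in *. nra.
Qed.

(* First-order expansion of a function of (r, t) with continuous partial
   derivatives, along a staircase path inside its domain D: from (r1, s)
   right to (M, s), up to (M, t0), then left to (x0, t0).  Only the three
   segments have to lie in D, which matters near a moving boundary. *)
Section Staircase.

Variables (D : R -> R -> Prop) (rho drho_r drho_t : R -> R -> R).
Hypotheses
  (Hrho_cont : forall r t, D r t -> cont2_within D rho r t)
  (Hrho_r_cont : forall r t, D r t -> cont2_within D drho_r r t)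
  (Hrho_t_cont : forall r t, D r t -> cont2_within D drho_t r t)
  (Hrho_r : forall r t, D r t ->
     deriv_within (fun y => D y t) (fun y => rho y t) (drho_r r t) r)
  (Hrho_t : forall r t, D r t ->
     deriv_within (fun s => D r s) (fun s => rho r s) (drho_t r t) t).

Lemma horizontal_increment r1 r2 t B e : r1 <= r2 -> (forall y, r1 <= y <= r2 -> D y t) ->
  (forall y, r1 < y < r2 -> Rabs (drho_r y t - B) <= e) ->
  Rabs (rho r2 t - rho r1 t - B * (r2 - r1)) <= e * (r2 - r1).
Proof.
  intros Hr Hseg Hb.
  apply (segment_increment (fun y => D y t) (fun y => rho y t) (fun y => drho_r y t));
    auto; intros y Hy.
  - apply cont2_within_slice_r, Hrho_cont, Hseg; lra.
  - apply Hrho_r, Hseg; lra.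
Qed.

Lemma vertical_increment r t1 t2 A e : t1 <= t2 -> (forall s, t1 <= s <= t2 -> D r s) ->
  (forall s, t1 < s < t2 -> Rabs (drho_t r s - A) <= e) ->
  Rabs (rho r t2 - rho r t1 - A * (t2 - t1)) <= e * (t2 - t1).
Proof.
  intros Ht Hseg Hb.
  apply (segment_increment (fun s => D r s) (fun s => rho r s) (fun s => drho_t r s));
    auto; intros s Hs.
  - apply cont2_within_slice_t, Hrho_cont, Hseg; lra.
  - apply Hrho_t, Hseg; lra.
Qed.

Lemma staircase_increment x0 t0 e : D x0 t0 -> 0 < e ->
  exists d, 0 < d /\ forall r1 M s,
    r1 <= M -> x0 <= M -> s <= t0 -> M - x0 < d -> x0 - r1 < d -> t0 - s < d ->
    (forall y, r1 <= y <= M -> D y s) -> (forall tau, s <= tau <= t0 -> D M tau) ->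
    (forall y, x0 <= y <= M -> D y t0) ->
    rho x0 t0 - rho r1 s <= drho_t x0 t0 * (t0 - s) + drho_r x0 t0 * (x0 - r1)
                            + e * ((M - r1) + (t0 - s) + (M - x0)).
Proof.
  intros Hin He.
  destruct (Hrho_r_cont x0 t0 Hin e He) as [dr [Hdr Hcr]].
  destruct (Hrho_t_cont x0 t0 Hin e He) as [dt [Hdt Hct]].
  exists (Rmin dr dt). split; [apply Rmin_pos; auto|].
  intros r1 M s HrM HxM Hst HM Hr1 Hs Hbot Hright Htop.
  pose proof (Rmin_l dr dt); pose proof (Rmin_r dr dt).
  assert (Hnear_r : forall y, (r1 <= y \/ x0 <= y) -> y <= M ->
            Rabs (y - x0) < dr /\ Rabs (y - x0) < dt)
    by (intros y Hy HyM; split; apply Rabs_def1; lra).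
  assert (Hnear_t : forall tau, s <= tau <= t0 ->
            Rabs (tau - t0) < dr /\ Rabs (tau - t0) < dt)
    by (intros tau Htau; split; apply Rabs_def1; lra).
  assert (Hinc_bot : Rabs (rho M s - rho r1 s - drho_r x0 t0 * (M - r1)) <= e * (M - r1)).
  { apply horizontal_increment; auto. intros y Hy. left.
    apply Hcr; [apply Hbot; lra| apply Hnear_r; lra| apply Hnear_t; lra]. }
  assert (Hinc_right : Rabs (rho M t0 - rho M s - drho_t x0 t0 * (t0 - s)) <= e * (t0 - s)).
  { apply vertical_increment; auto. intros tau Htau. left.
    apply Hct; [apply Hright; lra| apply Hnear_r; lra| apply Hnear_t; lra]. }
  assert (Hinc_top : Rabs (rho M t0 - rho x0 t0 - drho_r x0 t0 * (M - x0)) <= e * (M - x0)).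
  { apply horizontal_increment; auto. intros y Hy. left.
    apply Hcr; [apply Htop; lra| apply Hnear_r; lra| apply Hnear_t; lra]. }
  apply Rabs_le_inv in Hinc_bot, Hinc_right, Hinc_top. lra.
Qed.

End Staircase.

Section Contact.

Variables (Rb Rdot : R -> R) (L T c ts : R) (rho drho_r drho_t : R -> R -> R).
Hypotheses
  (Hts : 0 < ts < T) (HRb_ts : Rb ts < L)
  (HRb_deriv : deriv_within (fun s => 0 <= s < T) Rb (Rdot ts) ts)
  (Hrho_cont : forall r t, OmegaT Rb L T r t -> cont2_within (OmegaT Rb L T) rho r t)
  (Hrho_r_cont : forall r t, OmegaT Rb L T r t -> cont2_within (OmegaT Rb L T) drho_r r t)
  (Hrho_t_cont : forall r t, OmegaT Rb L T r t -> cont2_within (OmegaT Rb L T) drho_t r t)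
  (Hrho_r : forall r t, OmegaT Rb L T r t ->
     deriv_within (fun y => OmegaT Rb L T y t) (fun y => rho y t) (drho_r r t) r)
  (Hrho_t : forall r t, OmegaT Rb L T r t ->
     deriv_within (fun s => OmegaT Rb L T r s) (fun s => rho r s) (drho_t r t) t)
  (Hbefore : forall s r, 0 <= s < ts -> Rb s <= r <= L -> rho r s < c)
  (Hbelow : forall r, Rb ts <= r <= L -> rho r ts <= c).

(* Away from the boundary, rho(r, .) reaches c from below at time ts. *)
Lemma time_derivative_at_contact r : Rb ts < r <= L -> rho r ts = c ->
  0 <= drho_t r ts.
Proof.
  intros Hr Hc.
  destruct (deriv_within_cont _ _ _ _ HRb_deriv (r - Rb ts)) as [d [Hd HRbc]]; [lra|].
  apply (deriv_within_left_max (fun s => OmegaT Rb L T r s) (fun s => rho r s) _ ts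
           (Rmin d ts)); [apply Rmin_pos; lra| apply Hrho_t; repeat split; lra|].
  intros s Hs. pose proof (Rmin_l d ts); pose proof (Rmin_r d ts).
  specialize (HRbc s ltac:(lra) ltac:(apply Rabs_def1; lra)). apply Rabs_def2 in HRbc.
  split; [repeat split; lra|]. rewrite Hc. left. apply Hbefore; lra.
Qed.

(* At an interior contact point rho(., ts) is maximal, so rho_r vanishes. *)
Lemma space_derivative_at_interior_contact r : Rb ts < r < L -> rho r ts = c ->
  drho_r r ts = 0.
Proof.
  intros Hr Hc. assert (Hin : OmegaT Rb L T r ts) by (repeat split; lra).
  apply Rle_antisym.
  - apply (deriv_within_right_max (fun y => OmegaT Rb L T y ts) (fun y => rho y ts) _ r
             (L - r)); [lra| auto|].
    intros y Hy. split; [repeat split; lra|]. rewrite Hc. apply Hbelow; lra.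
  - apply (deriv_within_left_max (fun y => OmegaT Rb L T y ts) (fun y => rho y ts) _ r
             (r - Rb ts)); [lra| auto|].
    intros y Hy. split; [repeat split; lra|]. rewrite Hc. apply Hbelow; lra.
Qed.

Lemma boundary_backward_cone eps C : 0 < eps -> Rabs (Rdot ts) + 1 <= C ->
  exists h0, 0 < h0 /\ forall h, 0 < h < h0 ->
    h < ts /\ Rb ts + C * h < L /\ Rb (ts - h) <= Rb ts + (eps - Rdot ts) * h /\
    (forall tau, ts - h <= tau <= ts -> Rb tau <= Rb ts + C * h).
Proof.
  intros Heps HC. set (V := Rdot ts) in *.
  pose proof (Rle_abs V); pose proof (Rle_abs (- V)). rewrite Rabs_Ropp in *.
  destruct (deriv_within_taylor _ _ _ _ eps Heps HRb_deriv) as [d1 [Hd1 Htay]].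
  destruct (deriv_within_taylor _ _ _ _ 1 Rlt_0_1 HRb_deriv) as [d2 [Hd2 Hlip]].
  exists (Rmin (Rmin ts d1) (Rmin d2 ((L - Rb ts) / C))). split.
  { repeat apply Rmin_pos; try apply Rdiv_lt_0_compat; lra. }
  intros h Hh.
  assert (Hbd : h < ts /\ h < d1 /\ h < d2 /\ C * h < L - Rb ts).
  { pose proof (Rmin_l (Rmin ts d1) (Rmin d2 ((L - Rb ts) / C))).
    pose proof (Rmin_r (Rmin ts d1) (Rmin d2 ((L - Rb ts) / C))).
    pose proof (Rmin_l ts d1); pose proof (Rmin_r ts d1).
    pose proof (Rmin_l d2 ((L - Rb ts) / C)); pose proof (Rmin_r d2 ((L - Rb ts) / C)).
    assert (Hhc : h < (L - Rb ts) / C) by lra.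
    apply Rmult_lt_compat_l with (r := C) in Hhc; [|lra].
    replace (C * ((L - Rb ts) / C)) with (L - Rb ts) in Hhc by (field; lra). lra. }
  split; [lra|]. split; [lra|]. split.
  - specialize (Htay (ts - h) ltac:(lra) ltac:(apply Rabs_def1; lra)).
    replace (ts - h - ts) with (- h) in Htay by ring.
    rewrite Rabs_Ropp, (Rabs_right h) in Htay by lra. apply Rabs_le_inv in Htay. nra.
  - intros tau Htau. specialize (Hlip tau ltac:(lra) ltac:(apply Rabs_def1; lra)).
    rewrite (Rabs_left1 (tau - ts)) in Hlip by lra. apply Rabs_le_inv in Hlip.
    assert (V * (tau - ts) <= Rabs V * h) by nra. nra.
Qed.

(* Otherwise, following the staircase from
   (a + (eps - V) h, ts - h), which lies in the region just behind the
   boundary, to (a, ts) would make rho(a, ts) smaller than an earlier value,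
   which is below c. *)
Lemma boundary_contact : rho (Rb ts) ts = c ->
  0 <= drho_t (Rb ts) ts + Rdot ts * drho_r (Rb ts) ts.
Proof.
  intros Hc. assert (Hin : OmegaT Rb L T (Rb ts) ts) by (repeat split; lra).
  set (a := Rb ts) in *. set (A := drho_t a ts). set (B := drho_r a ts).
  set (V := Rdot ts) in *. apply Rnot_lt_le; intro Hneg.
  set (eta := - (A + V * B) / 2).
  destruct (perturbed_slope A B V Hneg) as [eps [Heps Hslope]].
  set (k := eps - V). set (C := Rabs k + Rabs V + 2).
  assert (HC : Rabs k + Rabs V + 2 = C) by reflexivity.
  pose proof (Rabs_pos k); pose proof (Rabs_pos V).
  pose proof (Rle_abs k); pose proof (Rle_abs (- k)). rewrite Rabs_Ropp in *.
  set (e := eta / (3 * C + 2)).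
  assert (He : 0 < e /\ e * (3 * C + 2) = eta).
  { unfold e. split; [apply Rdiv_lt_0_compat; unfold eta; lra| field; lra]. }
  destruct (staircase_increment (OmegaT Rb L T) rho drho_r drho_t Hrho_cont Hrho_r_cont
              Hrho_t_cont Hrho_r Hrho_t a ts e Hin (proj1 He)) as [d [Hd Hstair]].
  destruct (boundary_backward_cone eps C Heps) as [h0 [Hh0 Hcone]]; [fold V; lra|].
  set (h := Rmin h0 (d / (C + 1)) / 2).
  assert (Hh : 0 < h < h0 /\ (C + 1) * h < d).
  { pose proof (Rmin_l h0 (d / (C + 1))); pose proof (Rmin_r h0 (d / (C + 1))).
    assert (Hdpos : 0 < d / (C + 1)) by (apply Rdiv_lt_0_compat; lra).
    pose proof (Rmin_pos h0 (d / (C + 1)) Hh0 Hdpos).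
    split; [unfold h; lra|]. apply Rmult_lt_reg_r with (/ (C + 1)); [apply Rinv_0_lt_compat; lra|].
    replace ((C + 1) * h * / (C + 1)) with h by (field; lra). unfold h, Rdiv in *. lra. }
  destruct (Hcone h (proj1 Hh)) as [Hhts [HML [Hr1 HbM]]]. fold a V k in Hr1, HbM, HML.
  set (s := ts - h) in *. set (r1 := a + k * h) in *. set (M := a + C * h) in *.
  assert (Hkh : - (C * h) <= k * h <= C * h) by (destruct Hh; nra).
  assert (Hlow : rho a ts - rho r1 s <= (A - B * k + e * (2 * C - k + 1)) * h).
  { replace ((A - B * k + e * (2 * C - k + 1)) * h) with
      (A * (ts - s) + B * (a - r1) + e * ((M - r1) + (ts - s) + (M - a)))
      by (unfold s, r1, M; ring).
    destruct Hh. apply Hstair; unfold s, r1, M, a in *; try nra.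
    - intros y Hy. split; lra.
    - intros tau Htau. pose proof (HbM tau Htau). split; lra.
    - intros y Hy. split; lra. }
  assert (Hrate : A - B * k + e * (2 * C - k + 1) < 0).
  { assert (e * (2 * C - k + 1) < eta) by (destruct He as [He1 He2]; rewrite <- He2; nra).
    unfold k, eta in *. lra. }
  assert (Hearlier : rho r1 s < c) by (apply Hbefore; unfold s, r1, M in *; lra).
  destruct Hh. nra.
Qed.

Lemma material_derivative_at_contact (v : R -> R -> R) rs :
  v L ts = 0 -> Rdot ts = v (Rb ts) ts -> Rb ts <= rs <= L -> rho rs ts = c ->
  0 <= drho_t rs ts + v rs ts * drho_r rs ts.
Proof.
  intros HvL HRdot Hrs Hc. destruct (Req_dec rs (Rb ts)) as [->|Hne].
  { rewrite <- HRdot. apply boundary_contact; auto. }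
  destruct (Req_dec rs L) as [->|HneL].
  - rewrite HvL, Rmult_0_l, Rplus_0_r. apply time_derivative_at_contact; [lra| auto].
  - rewrite (space_derivative_at_interior_contact rs), Rmult_0_r, Rplus_0_r; [|lra| auto].
    apply time_derivative_at_contact; [lra| auto].
Qed.

End Contact.

Section Model.

Variables (Rb : R -> R) (L T beta ts rho_m : R)
          (rho drho_r drho_t v dv_r dv_rr dP : R -> R -> R).
Hypotheses
  (Hts : 0 < ts < T) (HRb_ts : 0 < Rb ts < L) (Hbeta : 0 < beta) (Hrhom : 1 < rho_m)
  (Hrho_cont : forall r t, OmegaT Rb L T r t -> cont2_within (OmegaT Rb L T) rho r t)
  (Hrho_r_cont : forall r t, OmegaT Rb L T r t -> cont2_within (OmegaT Rb L T) drho_r r t)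
  (Hrho_t_cont : forall r t, OmegaT Rb L T r t -> cont2_within (OmegaT Rb L T) drho_t r t)
  (Hv_cont : forall r t, OmegaT Rb L T r t -> cont2_within (OmegaT Rb L T) v r t)
  (Hv_r_cont : forall r t, OmegaT Rb L T r t -> cont2_within (OmegaT Rb L T) dv_r r t)
  (Hbelow : forall r, Rb ts <= r <= L -> rho r ts <= rho_m).

Lemma divergence_at_contact rs :
  (forall r t, OmegaT Rb L T r t ->
     deriv_within (fun y => OmegaT Rb L T y t) (fun y => v y t) (dv_r r t) r) ->
  (forall r t, OmegaT Rb L T r t ->
     deriv_within (fun y => OmegaT Rb L T y t) (fun y => dv_r y t) (dv_rr r t) r) ->
  (forall r, Rb ts < r < L ->
     derivable_pt_lim (fun y => Pfun beta (rho y ts)) r (dP r ts)) ->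
  (forall r, Rb ts < r < L ->
     / r * (dv_r r ts + r * dv_rr r ts) - v r ts / r ^ 2 = dP r ts) ->
  v L ts = 0 -> dv_r (Rb ts) ts = Pfun beta (rho (Rb ts) ts) ->
  Rb ts <= rs <= L -> rho rs ts = rho_m ->
  0 < dv_r rs ts + v rs ts / rs.
Proof.
  intros Hv_r Hv_rr HP_r Hv_eq HvL HvR Hrs Hc.
  assert (Hslice : forall y, Rb ts <= y <= L -> OmegaT Rb L T y ts) by (repeat split; lra).
  assert (Hcont : forall g, (forall r t, OmegaT Rb L T r t -> cont2_within (OmegaT Rb L T) g r t) ->
            forall x, Rb ts <= x <= L ->
            cont_within (fun y => Rb ts <= y <= L) (fun y => g y ts) x).
  { intros g Hg x Hx. apply (cont_within_subset (fun y => OmegaT Rb L T y ts)); auto.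
    apply cont2_within_slice_r, Hg, Hslice, Hx. }
  apply (divergence_positive_at_max (Rb ts) L beta (fun y => v y ts) (fun y => dv_r y ts)
           (fun y => dv_rr y ts) (fun y => rho y ts) (fun y => dP y ts))
    with (m := rho_m); auto.
  - intros x Hx. apply (deriv_within_interior (fun y => OmegaT Rb L T y ts) _ _ (Rb ts) L);
      auto; [intros; apply Hslice; lra| apply Hv_r, Hslice; lra].
  - intros x Hx. apply (deriv_within_interior (fun y => OmegaT Rb L T y ts) _ _ (Rb ts) L);
      auto; [intros; apply Hslice; lra| apply Hv_rr, Hslice; lra].
Qed.

(* At a contact point (ts > 0), the transport equation, extended by continuity
   to the closed slice, reduces to
     rho_t + v rho_r = - lambda rho_m - rho_m (v_r + v / r),
   the growth term vanishing because rho = rho_m. *)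
Lemma transport_at_contact (w f : R -> R -> R) k_rho K_wrho lambda_rho rs :
  0 < K_wrho ->
  (forall r t, OmegaT Rb L T r t -> 0 <= w r t) ->
  (forall r t, OmegaT Rb L T r t -> cont2_within (OmegaT Rb L T) w r t) ->
  (forall r t, OmegaT Rb L T r t -> cont2_within (OmegaT Rb L T) f r t) ->
  (forall r, Rb ts < r < L ->
     drho_t r ts + / r * (rho r ts * v r ts + r * drho_r r ts * v r ts
                          + r * rho r ts * dv_r r ts)
     = k_rho * w r ts / (w r ts + K_wrho) * f r ts * (1 - rho r ts / rho_m)
       - lambda_rho * rho r ts) ->
  Rb ts <= rs <= L -> rho rs ts = rho_m ->
  drho_t rs ts + v rs ts * drho_r rs ts
  = - lambda_rho * rho_m - rho_m * (dv_r rs ts + v rs ts / rs).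
Proof.
  intros HK Hw_nonneg Hw_cont Hf_cont Hrho_eq Hrs Hc.
  assert (Hslice : forall y, Rb ts <= y <= L -> OmegaT Rb L T y ts) by (repeat split; lra).
  set (G := fun y => drho_t y ts + / y * (rho y ts * v y ts + y * drho_r y ts * v y ts
      + y * rho y ts * dv_r y ts) - (k_rho * w y ts / (w y ts + K_wrho) * f y ts
      * (1 - rho y ts / rho_m) - lambda_rho * rho y ts)).
  assert (HG : G rs = 0).
  { assert (Hz := vanishing_extension (fun y => G (clamp (Rb ts) L y)) (Rb ts) L rs
                    ltac:(lra) Hrs).
    cbv beta in Hz. rewrite clamp_id in Hz by lra. apply Hz.
    - pose proof (Hw_nonneg rs ts (Hslice rs Hrs)).
      unfold G. continuity_split; try lra; try (rewrite clamp_id by lra; lra).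
      all: apply cont2_slice_clamp with (D := OmegaT Rb L T); [lra| exact Hslice| exact Hrs|].
      all: auto.
    - intros y Hy. rewrite clamp_id by lra. unfold G. rewrite Hrho_eq by lra. ring. }
  unfold G in HG. rewrite Hc in HG.
  pose proof (Hw_nonneg rs ts (Hslice rs Hrs)).
  rewrite <- (Rminus_0_r (drho_t rs ts + v rs ts * drho_r rs ts)), <- HG.
  field. lra.
Qed.

End Model.

Theorem lemma4p3
  (L R0 beta T : R) (Rb Rdot : R -> R)
  (rho drho_r drho_t v dv_r dv_rr dP w f : R -> R -> R)
  (k_rho K_wrho lambda_rho rho_m : R)
  (* constants *)
  (HL : 0 < L) (HR0 : 0 < R0 < L) (Hbeta : 0 < beta) (HT : 0 < T)
  (* R in C^1([0,T)), R(0) = R0, 0 < R(t) < L *)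
  (HRb0 : Rb 0 = R0)
  (HRb_range : forall t, 0 <= t < T -> 0 < Rb t < L)
  (HRb_deriv : forall t, 0 <= t < T -> deriv_within (fun s => 0 <= s < T) Rb (Rdot t) t)
  (HRdot_cont : forall t, 0 <= t < T -> cont_within (fun s => 0 <= s < T) Rdot t)
  (* rho >= 0, classical C^1 on Omega_T *)
  (Hrho_nonneg : forall r t, OmegaT Rb L T r t -> 0 <= rho r t)
  (Hrho_cont : forall r t, OmegaT Rb L T r t -> cont2_within (OmegaT Rb L T) rho r t)
  (Hrho_r_cont : forall r t, OmegaT Rb L T r t -> cont2_within (OmegaT Rb L T) drho_r r t)
  (Hrho_t_cont : forall r t, OmegaT Rb L T r t -> cont2_within (OmegaT Rb L T) drho_t r t)
  (Hrho_r : forall r t, OmegaT Rb L T r t ->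
     deriv_within (fun y => OmegaT Rb L T y t) (fun y => rho y t) (drho_r r t) r)
  (Hrho_t : forall r t, OmegaT Rb L T r t ->
     deriv_within (fun s => OmegaT Rb L T r s) (fun s => rho r s) (drho_t r t) t)
  (* v classical on Omega_T, twice continuously differentiable in r *)
  (Hv_cont : forall r t, OmegaT Rb L T r t -> cont2_within (OmegaT Rb L T) v r t)
  (Hv_r_cont : forall r t, OmegaT Rb L T r t -> cont2_within (OmegaT Rb L T) dv_r r t)
  (Hv_rr_cont : forall r t, OmegaT Rb L T r t -> cont2_within (OmegaT Rb L T) dv_rr r t)
  (Hv_r : forall r t, OmegaT Rb L T r t ->
     deriv_within (fun y => OmegaT Rb L T y t) (fun y => v y t) (dv_r r t) r)
  (Hv_rr : forall r t, OmegaT Rb L T r t ->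
     deriv_within (fun y => OmegaT Rb L T y t) (fun y => dv_r y t) (dv_rr r t) r)
  (* elliptic equation for v: (1/r)(r v_r)_r - v/r^2 = d_r P, for R(t) < r < L *)
  (HP_r : forall r t, 0 <= t < T -> Rb t < r < L ->
     derivable_pt_lim (fun y => Pfun beta (rho y t)) r (dP r t))
  (Hv_eq : forall r t, 0 <= t < T -> Rb t < r < L ->
     / r * (dv_r r t + r * dv_rr r t) - v r t / r ^ 2 = dP r t)
  (Hv_L : forall t, 0 <= t < T -> v L t = 0)
  (Hv_R : forall t, 0 <= t < T -> dv_r (Rb t) t = Pfun beta (rho (Rb t) t))
  (HRdot : forall t, 0 <= t < T -> Rdot t = v (Rb t) t)
  (* additional hypotheses of the lemma *)
  (Hk : 0 < k_rho) (HK : 0 < K_wrho) (Hlam : 0 < lambda_rho) (Hrhom : 1 < rho_m)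
  (Hw_nonneg : forall r t, OmegaT Rb L T r t -> 0 <= w r t)
  (Hf_nonneg : forall r t, OmegaT Rb L T r t -> 0 <= f r t)
  (Hw_cont : forall r t, OmegaT Rb L T r t -> cont2_within (OmegaT Rb L T) w r t)
  (Hf_cont : forall r t, OmegaT Rb L T r t -> cont2_within (OmegaT Rb L T) f r t)
  (* rho_t + (1/r) d_r (r rho v) = k w/(w+K) f (1 - rho/rho_m) - lambda rho *)
  (Hrho_eq : forall r t, 0 < t < T -> Rb t < r < L ->
     drho_t r t + / r * (rho r t * v r t + r * drho_r r t * v r t + r * rho r t * dv_r r t)
     = k_rho * w r t / (w r t + K_wrho) * f r t * (1 - rho r t / rho_m)
       - lambda_rho * rho r t)
  (Hinit : forall r, R0 <= r <= L -> rho r 0 < rho_m) :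
  forall r t, OmegaT Rb L T r t -> rho r t < rho_m.
Proof.
  intros r t Hrt. apply Rnot_le_lt; intro Hexceed.
  assert (HRb_cont : forall s, 0 <= s < T -> cont_within (fun s => 0 <= s < T) Rb s)
    by (intros s Hs; exact (deriv_within_cont _ _ _ _ (HRb_deriv s Hs))).
  rewrite <- HRb0 in Hinit.
  destruct (first_contact Rb L T rho_m rho HRb_cont HRb_range Hrho_cont Hinit
              (ex_intro _ r (ex_intro _ t (conj Hrt Hexceed))))
    as [ts [rs [Hts [Hrs [Hcontact [Hbelow Hbefore]]]]]].
  assert (Hts0 : 0 <= ts < T) by lra.
  pose proof (divergence_at_contact Rb L T beta ts rho_m rho v dv_r dv_rr dP Hts
                (HRb_range ts Hts0) Hbeta Hrhom Hrho_cont Hv_cont Hv_r_cont Hbelow rs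
                Hv_r Hv_rr (fun y Hy => HP_r y ts Hts0 Hy) (fun y Hy => Hv_eq y ts Hts0 Hy)
                (Hv_L ts Hts0) (Hv_R ts Hts0) Hrs Hcontact) as Hexpanding.
  pose proof (transport_at_contact Rb L T ts rho_m rho drho_r drho_t v dv_r Hts
                (HRb_range ts Hts0) Hrhom Hrho_cont Hrho_r_cont Hrho_t_cont Hv_cont Hv_r_cont
                w f k_rho K_wrho lambda_rho rs HK Hw_nonneg Hw_cont Hf_cont
                (fun y Hy => Hrho_eq y ts Hts Hy) Hrs Hcontact) as Htransport.
  pose proof (material_derivative_at_contact Rb Rdot L T rho_m ts rho drho_r drho_t Hts
                (proj2 (HRb_range ts Hts0)) (HRb_deriv ts Hts0) Hrho_cont Hrho_r_cont
                Hrho_t_cont Hrho_r Hrho_t Hbefore Hbelow v rs (Hv_L ts Hts0) (HRdot ts Hts0)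
                Hrs Hcontact) as Hmaterial.
  rewrite Htransport in Hmaterial. nra.
Qed.
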